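(* For the operad $\operatorname{Arb}^{!}$, one has $\operatorname{Arb}^{!}(1)\cong\operatorname{Ass}(1)$ and, for every $n\ge2$, $\operatorname{Arb}^{!}(n)\cong\operatorname{Lie}(n)\oplus\operatorname{Ass}(n)$ as $\mathfrak{S}_n$-modules, where $\operatorname{Lie}(n)$ and $\operatorname{Ass}(n)$ are the arity-$n$ components of the classical operads $\operatorname{Lie}$ and $\operatorname{Ass}$.
   Context: $\operatorname{Arb}^{!}$ is the binary quadratic (linear) operad whose algebras are vector spaces $A$ with an antisymmetric bracket $[\,,\,]$ and a (non-commutative) product $*$ satisfying, for all $a,b,c\in A$: $[a,[b,c]]+[b,[c,a]]+[c,[a,b]]=0$; $[a,b]*c=0$; $a*(b*c)=0$; $[a*b,c]=0$; $a*[b,c]=(a*b)*c-(a*c)*b$. (It is the Koszul dual of the operad of shrubs, but this definition by generators and relations suffices.) *)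

From HB Require Import structures.
From mathcomp Require Import all_boot all_order fingroup perm all_algebra.
Set Implicit Arguments. Unset Strict Implicit. Unset Printing Implicit Defensive.
Import GRing.Theory.
Local Open Scope ring_scope.

(* Binary trees with two kinds of internal nodes: Br = bracket [ , ],
   Pr = product * ; leaves are labelled by natural numbers. *)
Inductive tr : Type := Lf of nat | Br of tr & tr | Pr of tr & tr.

Definition tr_eq_dec : forall x y : tr, {x = y} + {x <> y}.
Proof. decide equality; decide equality. Defined.
HB.instance Definition _ := hasDecEq.Build tr (compareP tr_eq_dec).

Fixpoint leaves (t : tr) : seq nat :=
  match t with Lf x => [:: x] | Br l r => leaves l ++ leaves r
             | Pr l r => leaves l ++ leaves r end.

Fixpoint gen (n f k : nat) : seq tr :=
  match f with
  | 0 => [::]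
  | f'.+1 =>
    if k == 1%N then map Lf (iota 0 n)
    else flatten [seq flatten [seq flatten [seq [:: Br l r; Pr l r]
                                           | r <- gen n f' (k - i)]
                              | l <- gen n f' i]
                 | i <- iota 1 k.-1]
  end.

(* basis of the arity-n component of the free operad on [,] and * :
   multilinear trees whose leaves are exactly 0..n-1, each once *)
Definition trees (n : nat) : seq tr :=
  undup [seq t <- gen n n n | perm_eq (leaves t) (iota 0 n)].

(* basis of Ass(n): words using each of 0..n-1 exactly once *)
Definition words (n : nat) : seq (seq nat) := permutations (iota 0 n).

Definition actn (n : nat) (s : 'S_n) (x : nat) : nat :=
  odflt x (omap (fun i : 'I_n => val (s i)) (insub x)).

Fixpoint relabel (f : nat -> nat) (t : tr) : tr :=
  match t with Lf x => Lf (f x) | Br l r => Br (relabel f l) (relabel f r)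
             | Pr l r => Pr (relabel f l) (relabel f r) end.

Section Spaces.
Variable K : fieldType.

Definition tvec (n : nat) (t : tr) : 'rV[K]_(size (trees n)) :=
  \row_i ((nth t (trees n) i == t)%:R).

Definition fvec (n : nat) (s : seq (K * tr)) : 'rV[K]_(size (trees n)) :=
  \sum_(p <- s) p.1 *: tvec n p.2.

(* relation instances whose "leading" monomial is the tree itself *)
Definition rel_root (t : tr) : seq (seq (K * tr)) :=
  (if t is Br a b then [:: [:: (1, Br a b); (1, Br b a)]] else [::])
  ++ (if t is Br a (Br b c) then
        [:: [:: (1, t); (1, Br b (Br c a)); (1, Br c (Br a b))]] else [::])
  ++ (if t is Pr (Br a b) c then [:: [:: (1, t)]] else [::])
  ++ (if t is Pr a (Pr b c) then [:: [:: (1, t)]] else [::])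
  ++ (if t is Br (Pr a b) c then [:: [:: (1, t)]] else [::])
  ++ (if t is Pr a (Br b c) then
        [:: [:: (1, t); (-1, Pr (Pr a b) c); (1, Pr (Pr a c) b)]] else [::]).

(* relation instances plugged at every position of t (operadic ideal) *)
Fixpoint all_rels (t : tr) : seq (seq (K * tr)) :=
  rel_root t ++
  match t with
  | Lf _ => [::]
  | Br l r => [seq [seq (p.1, Br p.2 r) | p <- c] | c <- all_rels l]
           ++ [seq [seq (p.1, Br l p.2) | p <- c] | c <- all_rels r]
  | Pr l r => [seq [seq (p.1, Pr p.2 r) | p <- c] | c <- all_rels l]
           ++ [seq [seq (p.1, Pr l p.2) | p <- c] | c <- all_rels r]
  end.

Definition Rels (n : nat) : seq (seq (K * tr)) :=
  flatten [seq all_rels t | t <- trees n].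

(* rows span the arity-n component of the ideal; Arb^!(n) = K^(trees n)/rowspace *)
Definition ArbRel (n : nat) : 'M[K]_(size (Rels n), size (trees n)) :=
  \matrix_(i < size (Rels n)) fvec n (nth [::] (Rels n) i).

(* S_n acting (on row vectors, by right multiplication) on the free operad *)
Definition treeAct (n : nat) (s : 'S_n) : 'M[K]_(size (trees n)) :=
  \matrix_(i, j) ((nth (Lf 0) (trees n) j
                    == relabel (actn s) (nth (Lf 0) (trees n) i))%:R).

Definition wvec (n : nat) (w : seq nat) : 'rV[K]_(size (words n)) :=
  \row_i ((nth w (words n) i == w)%:R).

Definition wfvec (n : nat) (s : seq (K * seq nat)) : 'rV[K]_(size (words n)) :=
  \sum_(p <- s) p.1 *: wvec n p.2.

Definition wordAct (n : nat) (s : 'S_n) : 'M[K]_(size (words n)) :=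
  \matrix_(i, j) ((nth [::] (words n) j
                    == map (actn s) (nth [::] (words n) i))%:R).

(* expansion in the free associative algebra, [u,v] = uv - vu *)
Fixpoint expand (t : tr) : seq (K * seq nat) :=
  match t with
  | Lf x => [:: (1, [:: x])]
  | Br l r =>
      [seq (a.1 * b.1, a.2 ++ b.2) | a <- expand l, b <- expand r]
   ++ [seq (- (a.1 * b.1), b.2 ++ a.2) | a <- expand l, b <- expand r]
  | Pr l r => [seq (a.1 * b.1, a.2 ++ b.2) | a <- expand l, b <- expand r]
  end.

Fixpoint brOnly (t : tr) : bool :=
  match t with Lf _ => true | Br l r => brOnly l && brOnly r | Pr _ _ => false end.

Definition LieGen (n : nat) : seq tr := [seq t <- trees n | brOnly t].

(* rows span Lie(n) = multilinear Lie polynomials, inside Ass(n) *)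
Definition LieMx (n : nat) : 'M[K]_(size (LieGen n), size (words n)) :=
  \matrix_(i < size (LieGen n)) wfvec n (expand (nth (Lf 0) (LieGen n) i)).

(* target Lie(n) (+) Ass(n) inside K^words (+) K^words, with diagonal action *)
Definition LieAssMx (n : nat) :=
  block_mx (LieMx n) 0 0 (1%:M : 'M[K]_(size (words n))).

Definition LieAssAct (n : nat) (s : 'S_n) : 'M[K]_(size (words n) + size (words n)) :=
  block_mx (wordAct s) 0 0 (wordAct s).

(* Isomorphism of S_n-modules  K^N / rowspace R  ~=  rowspace W  (W stable
   under Q): an S_n-equivariant linear map K^N -> K^m with kernel rowspace R
   and image rowspace W. *)
Definition quot_iso (n N m r k : nat) (R : 'M[K]_(r, N)) (P : 'S_n -> 'M[K]_N)
    (W : 'M[K]_(k, m)) (Q : 'S_n -> 'M[K]_m) : Prop :=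
  exists F : 'M[K]_(N, m),
    [/\ (kermx F == R)%MS, (F == W)%MS & forall s, P s *m F = F *m Q s].

End Spaces.

From HB Require Import structures.
From mathcomp Require Import all_boot all_order fingroup perm all_algebra.
From mathcomp Require Import ring zify.
Set Implicit Arguments. Unset Strict Implicit. Unset Printing Implicit Defensive.
Import GRing.Theory.
Local Open Scope ring_scope.

(* A tree [t] is evaluated as a pair of noncommutative polynomials: [lie_eval t]
   reads [ , ] as the commutator and kills [*], while [ass_eval t] reads [a * b]
   as [ass_eval a] times [lie_eval b] and kills a bracket at the root.  Both kill
   the relations of Arb^! and commute with relabelling, which gives an
   S_n-equivariant map Arb^!(n) -> Lie(n) (+) Ass(n).  Modulo the relations every
   tree reduces to a left-normed bracket whose first leaf is 0 or to a left-normed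
   product of leaves; the evaluations of these normal forms are triangular with
   respect to their leaf words, so the map is injective.  Bracket-only trees and
   left-normed products of the words show that it is onto. *)

(** * Noncommutative series *)

Section WordSeries.
Variable R : comRingType.
Implicit Types f g h : seq nat -> R.

(* Cauchy product of noncommutative series, i.e. of functions on words:
   (f * g) w = \sum_(w = u ++ v) f u * g v. *)
Fixpoint wmul f g (w : seq nat) {struct w} : R :=
  match w with
  | [::] => f [::] * g [::]
  | x :: w' => f [::] * g w + wmul (fun u => f (x :: u)) g w'
  end.

Definition wbr f g : seq nat -> R := fun u => wmul f g u - wmul g f u.

Definition wdelta (v : seq nat) : seq nat -> R := fun u => (u == v)%:R.

Lemma eq_wmul f f' g g' w : f =1 f' -> g =1 g' -> wmul f g w = wmul f' g' w.
Proof.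
elim: w f f' => [|x w IH] f f' ef eg /=; first by rewrite ef eg.
by rewrite ef eg (IH _ (fun u => f' (x :: u))).
Qed.

Lemma wmulDl f h g w : wmul (fun u => f u + h u) g w = wmul f g w + wmul h g w.
Proof.
elim: w f h => [|x w IH] f h /=; first by rewrite mulrDl.
by rewrite IH mulrDl; ring.
Qed.

Lemma wmulDr f g h w : wmul f (fun u => g u + h u) w = wmul f g w + wmul f h w.
Proof.
elim: w f => [|x w IH] f /=; first by rewrite mulrDr.
by rewrite IH mulrDr; ring.
Qed.

Lemma wmulZl k f g w : wmul (fun u => k * f u) g w = k * wmul f g w.
Proof.
elim: w f => [|x w IH] f /=; first by rewrite mulrA.
by rewrite IH mulrDr mulrA.
Qed.

Lemma wmulZr k f g w : wmul f (fun u => k * g u) w = k * wmul f g w.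
Proof.
elim: w f => [|x w IH] f /=; first by rewrite mulrCA.
by rewrite IH mulrDr mulrCA.
Qed.

Lemma wmul0l g w : wmul (fun _ => 0) g w = 0.
Proof. by elim: w => [|x w IH] /=; rewrite ?IH mul0r ?addr0. Qed.

Lemma wmul0r f w : wmul f (fun _ => 0) w = 0.
Proof. by elim: w f => [|x w IH] f /=; rewrite ?IH mulr0 ?addr0. Qed.

Lemma wmul_eq0l f g w : f =1 (fun _ => 0) -> wmul f g w = 0.
Proof. by move=> f0; rewrite (@eq_wmul _ _ g g _ f0) ?wmul0l. Qed.

Lemma wmul_eq0r f g w : g =1 (fun _ => 0) -> wmul f g w = 0.
Proof. by move=> g0; rewrite (@eq_wmul f f _ _ _ _ g0) ?wmul0r. Qed.

Lemma wmulBl f h g w : wmul (fun u => f u - h u) g w = wmul f g w - wmul h g w.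
Proof.
rewrite wmulDl -mulN1r -wmulZl; congr (_ + _).
by apply: eq_wmul => // u; rewrite mulN1r.
Qed.

Lemma wmulBr f g h w : wmul f (fun u => g u - h u) w = wmul f g w - wmul f h w.
Proof.
rewrite wmulDr -mulN1r -wmulZr; congr (_ + _).
by apply: eq_wmul => // u; rewrite mulN1r.
Qed.

Lemma wmulA f g h w : wmul (wmul f g) h w = wmul f (wmul g h) w.
Proof.
elim: w f => [|x w IH] f /=; first by rewrite mulrA.
by rewrite wmulDl wmulZl IH; ring.
Qed.

Lemma wbr_jacobi f g h u :
  wbr f (wbr g h) u + wbr g (wbr h f) u + wbr h (wbr f g) u = 0.
Proof. by rewrite /wbr !(wmulBl, wmulBr, wmulA); ring. Qed.

Lemma wmul_wbr f g h u : wmul f (wbr g h) u = wmul (wmul f g) h u - wmul (wmul f h) g u.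
Proof. by rewrite /wbr wmulBr !wmulA. Qed.

Lemma wmul_suml (I : Type) (r : seq I) (F : I -> seq nat -> R) g w :
  wmul (fun u => \sum_(i <- r) F i u) g w = \sum_(i <- r) wmul (F i) g w.
Proof.
elim: r => [|i r IH]; first by rewrite big_nil wmul_eq0l // => u; rewrite big_nil.
by rewrite big_cons -IH -wmulDl; apply: eq_wmul => // u; rewrite big_cons.
Qed.

Lemma wmul_sumr (I : Type) (r : seq I) (F : I -> seq nat -> R) f w :
  wmul f (fun u => \sum_(i <- r) F i u) w = \sum_(i <- r) wmul f (F i) w.
Proof.
elim: r => [|i r IH]; first by rewrite big_nil wmul_eq0r // => u; rewrite big_nil.
by rewrite big_cons -IH -wmulDr; apply: eq_wmul => // u; rewrite big_cons.
Qed.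

Lemma wmul1l g w : wmul (wdelta [::]) g w = g w.
Proof.
case: w => [|x w] /=; first by rewrite /wdelta eqxx mul1r.
by rewrite /wdelta eqxx mul1r wmul_eq0l ?addr0.
Qed.

Lemma wmul_delta x y w : wmul (wdelta x) (wdelta y) w = (w == x ++ y)%:R.
Proof.
elim: x w => [|a x IH] w; first exact: wmul1l.
case: w => [|b w] /=; first by rewrite /wdelta /= mul0r.
rewrite {1}/wdelta /= mul0r add0r.
rewrite (@eq_wmul _ (fun u => (b == a)%:R * wdelta x u) (wdelta y) (wdelta y)) //.
  by rewrite wmulZl IH eqseq_cons; case: (b == a); rewrite ?mul1r ?mul0r.
by move=> u; rewrite /wdelta eqseq_cons; case: (b == a); rewrite ?mul1r ?mul0r.
Qed.

Lemma wmul_delta1l y g x w : wmul (wdelta [:: y]) g (x :: w) = (x == y)%:R * g w.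
Proof.
rewrite /= {1}/wdelta /= mul0r add0r.
rewrite (@eq_wmul _ (fun u => (x == y)%:R * wdelta [::] u) g g) ?wmulZl ?wmul1l //.
by move=> u; rewrite /wdelta eqseq_cons; case: (x == y); rewrite ?mul1r ?mul0r.
Qed.

Lemma wmul_delta1r_nil f y : wmul f (wdelta [:: y]) [::] = 0.
Proof. by rewrite /= /wdelta mulr0. Qed.

Lemma wmul_delta1r f y v z : wmul f (wdelta [:: y]) (rcons v z) = (z == y)%:R * f v.
Proof.
elim: v f => [|a v IH] f /=.
  rewrite /wdelta /= !eqseq_cons !andbT mulr0 addr0 mulrC.
  by case: (z == y); rewrite ?eqxx.
rewrite IH {1}/wdelta /=.
have -> : (a :: rcons v z == [:: y]) = false.
  by rewrite eqseq_cons; case: v {IH} => [|b v]; rewrite /= andbF.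
by rewrite mulr0 add0r.
Qed.

Lemma wmul_map (psi : nat -> nat) f g u :
  wmul (fun v => f (map psi v)) (fun v => g (map psi v)) u = wmul f g (map psi u).
Proof. by elim: u f => [|x u IH] f //=; rewrite -IH. Qed.

Lemma wmul_sum_delta (c d : seq (R * seq nat)) u :
  wmul (fun v => \sum_(a <- c) a.1 * (v == a.2)%:R) (fun v => \sum_(b <- d) b.1 * (v == b.2)%:R) u
  = \sum_(a <- c) \sum_(b <- d) a.1 * b.1 * (u == a.2 ++ b.2)%:R.
Proof.
rewrite wmul_suml; apply: eq_bigr => a _.
rewrite wmulZl wmul_sumr big_distrr; apply: eq_bigr => b _ /=.
by rewrite wmulZr wmul_delta mulrA.
Qed.

End WordSeries.

(** * Trees and words *)

Lemma leaves_gt0 t : (0 < size (leaves t))%N.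
Proof. by elim: t => [x|l IHl r IHr|l IHl r IHr] //=; rewrite size_cat addn_gt0 IHl. Qed.

Lemma mem_gen n f k t : (k <= f)%N -> size (leaves t) = k ->
  all (fun x => x < n)%N (leaves t) -> t \in gen n f k.
Proof.
elim: f k t => [|f IH] k t kf sk al; first by move: (leaves_gt0 t); rewrite sk; lia.
rewrite /=; case: ifP => [/eqP k1|k1].
  case: t sk al => [x|l r|l r] /=; last first.
  - by rewrite size_cat k1 => h; move: (leaves_gt0 l) (leaves_gt0 r); lia.
  - by rewrite size_cat k1 => h; move: (leaves_gt0 l) (leaves_gt0 r); lia.
  by move=> _; rewrite andbT => xn; apply: map_f; rewrite mem_iota /=; lia.
have [l [r [|]]] : exists l r, t = Br l r \/ t = Pr l r.
  case: t sk {al} => [x|l r|l r] /= => [sk|_|_]; last 2 first.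
  - by exists l, r; left.
  - by exists l, r; right.
  by move/eqP: k1; rewrite -sk.
all: move=> ht; subst t; move: sk al => /= sk.
all: rewrite all_cat => /andP [al ar]; rewrite size_cat in sk.
all: have [l0 r0] := (leaves_gt0 l, leaves_gt0 r).
all: apply/flatten_mapP; exists (size (leaves l)); first by rewrite mem_iota; lia.
all: apply/flatten_mapP; exists l; first by apply: IH => //; lia.
all: apply/flatten_mapP; exists r; first by apply: IH => //; lia.
all: by rewrite !inE eqxx ?orbT.
Qed.

Lemma mem_trees n t : (t \in trees n) = perm_eq (leaves t) (iota 0 n).
Proof.
rewrite /trees mem_undup mem_filter; case p: (perm_eq _ _) => //=.
have sz : size (leaves t) = n by rewrite (perm_size p) size_iota.
apply: mem_gen => //; apply/allP => x; rewrite (perm_mem p) mem_iota; lia.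
Qed.

Lemma trees_uniq n : uniq (trees n).
Proof. exact: undup_uniq. Qed.

Lemma mem_words n w : (w \in words n) = perm_eq w (iota 0 n).
Proof. by rewrite /words mem_permutations. Qed.

Lemma words_uniq n : uniq (words n).
Proof. exact: permutations_uniq. Qed.

Lemma leaves_relabel f t : leaves (relabel f t) = map f (leaves t).
Proof. by elim: t => [x|l IHl r IHr|l IHl r IHr] //=; rewrite map_cat IHl IHr. Qed.

Lemma actnK n (s : 'S_n) : cancel (actn s) (actn s^-1).
Proof.
move=> x; rewrite /actn; case: insubP => [i _ <- /=|xn]; first by rewrite valK /= permK.
by rewrite /= insubF //; apply/negbTE.
Qed.

Lemma actnKV n (s : 'S_n) : cancel (actn s^-1) (actn s).
Proof. by move=> x; have := actnK s^-1 x; rewrite invgK. Qed.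

Lemma actn_lt n (s : 'S_n) x : (actn s x < n)%N = (x < n)%N.
Proof. by rewrite /actn; case: insubP => [i -> _ /=|/negbTE-> //]; rewrite ltn_ord. Qed.

Lemma perm_map_actn n (s : 'S_n) w :
  perm_eq w (iota 0 n) -> perm_eq (map (actn s) w) (iota 0 n).
Proof.
move=> ew; apply: perm_trans (perm_map _ ew) _.
apply: uniq_perm; rewrite ?iota_uniq ?(map_inj_uniq (can_inj (actnK s))) ?iota_uniq //.
move=> x; rewrite mem_iota /=; apply/mapP/idP => [[y]|xn].
  by rewrite mem_iota /= => yn ->; rewrite actn_lt.
by exists (actn s^-1 x); rewrite ?actnKV // mem_iota actn_lt.
Qed.

Lemma relabel_trees n (s : 'S_n) t : t \in trees n -> relabel (actn s) t \in trees n.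
Proof. by rewrite !mem_trees leaves_relabel; apply: perm_map_actn. Qed.

Inductive frame := FBl of tr | FBr of tr | FPl of tr | FPr of tr.

Definition fr (f : frame) (s : tr) : tr :=
  match f with FBl r => Br s r | FBr l => Br l s | FPl r => Pr s r | FPr l => Pr l s end.

Definition plug (C : seq frame) (s : tr) : tr := foldl (fun t f => fr f t) s C.

Definition mapc (K : Type) (g : tr -> tr) (c : seq (K * tr)) : seq (K * tr) :=
  [seq (p.1, g p.2) | p <- c].

Lemma leaves_fr f s s' :
  perm_eq (leaves s) (leaves s') -> perm_eq (leaves (fr f s)) (leaves (fr f s')).
Proof. by case: f => t /= h; rewrite ?perm_cat2r ?perm_cat2l. Qed.

Lemma leaves_plug C s s' :
  perm_eq (leaves s) (leaves s') -> perm_eq (leaves (plug C s)) (leaves (plug C s')).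
Proof. by elim: C s s' => [|f C IH] s s' h //=; apply/IH/leaves_fr. Qed.

Lemma plug_trees n C s s' :
  plug C s \in trees n -> perm_eq (leaves s') (leaves s) -> plug C s' \in trees n.
Proof. by rewrite !mem_trees => h p; apply: perm_trans (leaves_plug C p) h. Qed.

(** * Evaluation of trees *)

Section TreeEval.
Variable R : comRingType.

Fixpoint lie_eval (t : tr) : seq nat -> R :=
  match t with
  | Lf x => wdelta R [:: x]
  | Br l r => wbr (lie_eval l) (lie_eval r)
  | Pr _ _ => fun _ => 0
  end.

Fixpoint ass_eval (t : tr) : seq nat -> R :=
  match t with
  | Lf x => wdelta R [:: x]
  | Br _ _ => fun _ => 0
  | Pr l r => wmul (ass_eval l) (lie_eval r)
  end.

Variables (phi psi : nat -> nat).
Hypotheses (phiK : cancel phi psi) (psiK : cancel psi phi).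

Lemma lie_eval_relabel t u : lie_eval (relabel phi t) u = lie_eval t (map psi u).
Proof.
elim: t u => [x|l IHl r IHr|l IHl r IHr] u //=.
  by rewrite /wdelta -(inj_eq (inj_map (can_inj psiK))) /= phiK.
by rewrite /wbr (eq_wmul _ IHl IHr) (eq_wmul _ IHr IHl) !wmul_map.
Qed.

Lemma ass_eval_relabel t u : ass_eval (relabel phi t) u = ass_eval t (map psi u).
Proof.
elim: t u => [x|l IHl r IHr|l IHl r IHr] u //=.
  by rewrite /wdelta -(inj_eq (inj_map (can_inj psiK))) /= phiK.
by rewrite (eq_wmul _ IHl (lie_eval_relabel r)) wmul_map.
Qed.

End TreeEval.

Ltac mem_cases tac :=
  match goal with
  | |- is_true (_ \in _ :: _) -> _ =>
      rewrite in_cons => /orP []; [move=> /eqP ->; tac | mem_cases tac]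
  | |- is_true (_ \in [::]) -> _ => by rewrite in_nil
  end.

Section Relations.
Variable K : fieldType.

Lemma all_rels_fr f s (c : seq (K * tr)) :
  c \in all_rels K s -> mapc (fr f) c \in all_rels K (fr f s).
Proof. by case: f => t h; rewrite /= ?in_cons !mem_cat (map_f _ h) !orbT. Qed.

Lemma all_rels_plug C s (c : seq (K * tr)) :
  c \in all_rels K s -> mapc (plug C) c \in all_rels K (plug C s).
Proof.
elim: C s c => [|f C IH] s c h /=; first by rewrite /mapc map_id_in // => -[].
by have := IH _ _ (all_rels_fr f h); rewrite /mapc -map_comp.
Qed.

Lemma all_rels_Br l r : all_rels K (Br l r) = rel_root K (Br l r) ++
  map (mapc (fr (FBl r))) (all_rels K l) ++ map (mapc (fr (FBr l))) (all_rels K r).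
Proof. by []. Qed.

Lemma all_rels_Pr l r : all_rels K (Pr l r) = rel_root K (Pr l r) ++
  map (mapc (fr (FPl r))) (all_rels K l) ++ map (mapc (fr (FPr l))) (all_rels K r).
Proof. by []. Qed.

Lemma all_rels_ind (P : tr -> seq (K * tr) -> Prop) :
  (forall t, {in rel_root K t, forall c, P t c}) ->
  (forall f s c, P s c -> P (fr f s) (mapc (fr f) c)) ->
  forall t c, c \in all_rels K t -> P t c.
Proof.
move=> Proot Pfr; elim=> [//|l IHl r IHr|l IHl r IHr] c;
  rewrite ?all_rels_Br ?all_rels_Pr mem_cat => /orP [/Proot //|].
all: rewrite mem_cat => /orP [] /mapP [d hd ->].
- exact: (Pfr (FBl r) _ _ (IHl _ hd)).
- exact: (Pfr (FBr l) _ _ (IHr _ hd)).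
- exact: (Pfr (FPl r) _ _ (IHl _ hd)).
- exact: (Pfr (FPr l) _ _ (IHr _ hd)).
Qed.

Inductive arb_rel : tr -> seq (K * tr) -> Prop :=
  | RelAnti a b : arb_rel (Br a b) [:: (1, Br a b); (1, Br b a)]
  | RelJacobi a b c :
      arb_rel (Br a (Br b c)) [:: (1, Br a (Br b c)); (1, Br b (Br c a)); (1, Br c (Br a b))]
  | RelBrPr a b c : arb_rel (Pr (Br a b) c) [:: (1, Pr (Br a b) c)]
  | RelPrPr a b c : arb_rel (Pr a (Pr b c)) [:: (1, Pr a (Pr b c))]
  | RelPrBr a b c : arb_rel (Br (Pr a b) c) [:: (1, Br (Pr a b) c)]
  | RelPrLie a b c :
      arb_rel (Pr a (Br b c)) [:: (1, Pr a (Br b c)); (-1, Pr (Pr a b) c); (1, Pr (Pr a c) b)].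

Lemma rel_rootP t (c : seq (K * tr)) : c \in rel_root K t -> arb_rel t c.
Proof.
case: t => [//|a b|a b]; case: a => [?|??|??]; case: b => [?|??|??];
  rewrite /rel_root /= ?cats0; mem_cases constructor.
Qed.

Lemma rel_root_leaves t (r : seq (K * tr)) :
  r \in rel_root K t -> forall p, p \in r -> perm_eq (leaves p.2) (leaves t).
Proof.
by case/rel_rootP => [a b|a b c|a b c|a b c|a b c|a b c] p;
  mem_cases ltac:(apply/seq.permP => q; rewrite /= ?count_cat /=; lia).
Qed.

Lemma all_rels_leaves t (c : seq (K * tr)) :
  c \in all_rels K t -> forall p, p \in c -> perm_eq (leaves p.2) (leaves t).
Proof.
move: t c; apply: all_rels_ind; first exact: rel_root_leaves.
by move=> f s c hc p /mapP [q /hc hq ->]; apply: leaves_fr.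
Qed.

Lemma Rels_trees n (c : seq (K * tr)) p :
  c \in Rels K n -> p \in c -> p.2 \in trees n.
Proof.
case/flatten_mapP => t tT ct pc.
by rewrite mem_trees (perm_trans (all_rels_leaves ct pc)) // -mem_trees.
Qed.

Definition comb_eval (E : tr -> seq nat -> K) (c : seq (K * tr)) u : K :=
  \sum_(p <- c) p.1 * E p.2 u.

Definition vanishes (c : seq (K * tr)) : Prop :=
  forall u, comb_eval (lie_eval K) c u = 0 /\ comb_eval (ass_eval K) c u = 0.

Lemma rel_root_vanishes t r : r \in rel_root K t -> vanishes r.
Proof.
case/rel_rootP => [a b|a b c|a b c|a b c|a b c|a b c] u;
  rewrite /comb_eval !big_cons !big_nil /= ?mul1r ?mulN1r !addr0; split=> //.
- by rewrite /wbr; ring.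
- by rewrite addrA wbr_jacobi.
- exact: wmul0l.
- exact: wmul0r.
- by rewrite /wbr wmul0l wmul0r subrr.
- by rewrite subrr.
- by rewrite wmul_wbr; ring.
Qed.

Lemma comb_eval_wmull E (c : seq (K * tr)) (g : seq nat -> K) u :
  \sum_(p <- c) p.1 * wmul (E p.2) g u = wmul (comb_eval E c) g u.
Proof. by rewrite /comb_eval wmul_suml; apply: eq_bigr => p _; rewrite wmulZl. Qed.

Lemma comb_eval_wmulr E (c : seq (K * tr)) (f : seq nat -> K) u :
  \sum_(p <- c) p.1 * wmul f (E p.2) u = wmul f (comb_eval E c) u.
Proof. by rewrite /comb_eval wmul_sumr; apply: eq_bigr => p _; rewrite wmulZr. Qed.

Lemma vanishes_fr f c : vanishes c -> vanishes (mapc (fr f) c).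
Proof.
move=> c0 u; have lie0 : comb_eval (lie_eval K) c =1 (fun=> 0) by move=> v; case: (c0 v).
have ass0 : comb_eval (ass_eval K) c =1 (fun=> 0) by move=> v; case: (c0 v).
rewrite /comb_eval !big_map; case: f => t /=; split;
  try by rewrite big1 // => p _; rewrite mulr0.
all: rewrite /wbr; under eq_bigr do rewrite ?mulrBr.
all: rewrite ?sumrB ?comb_eval_wmull ?comb_eval_wmulr.
all: by rewrite ?(wmul_eq0l _ _ lie0) ?(wmul_eq0l _ _ ass0) ?(wmul_eq0r _ _ lie0) ?subrr.
Qed.

Lemma all_rels_vanishes t c : c \in all_rels K t -> vanishes c.
Proof. by move: t c; apply: all_rels_ind => [t r /rel_root_vanishes|f s c /vanishes_fr]. Qed.

End Relations.

Lemma sum_indicator_nth (R : pzSemiRingType) (T : eqType) (s : seq T) x0 y0 t (G : T -> R) :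
  uniq s -> t \in s -> \sum_(i < size s) (nth x0 s i == t)%:R * G (nth y0 s i) = G t.
Proof.
move=> us ts; have ti : (index t s < size s)%N by rewrite index_mem.
rewrite (bigD1 (Ordinal ti)) //= nth_index // eqxx mul1r.
rewrite (set_nth_default t y0 ti) nth_index // big1 ?addr0 // => i /eqP ne.
case: eqP => [e|]; last by rewrite mul0r.
by case: ne; apply: val_inj; rewrite /= -e index_uniq.
Qed.

Section EvalMatrix.
Variables (K : fieldType) (n : nat).
Local Notation T := (trees n).
Local Notation W := (words n).

Definition lie_row t : 'rV[K]_(size W) := \row_j lie_eval K t (nth [::] W j).
Definition ass_row t : 'rV[K]_(size W) := \row_j ass_eval K t (nth [::] W j).
Definition eval_row t := row_mx (lie_row t) (ass_row t).

Definition tree_mx m (H : tr -> 'rV[K]_m) : 'M_(size T, m) :=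
  \matrix_(i < size T) H (nth (Lf 0) T i).

Definition evalmx := tree_mx eval_row.

Lemma tvec_tree_mx m (H : tr -> 'rV[K]_m) t : t \in T -> tvec K n t *m tree_mx H = H t.
Proof.
move=> tT; apply/rowP => j; rewrite !mxE.
under eq_bigr do rewrite !mxE.
exact: (sum_indicator_nth _ _ (fun t => H t 0 j) (trees_uniq n) tT).
Qed.

Lemma fvec_tree_mx m (H : tr -> 'rV[K]_m) (c : seq (K * tr)) :
  (forall p, p \in c -> p.2 \in T) -> fvec n c *m tree_mx H = \sum_(p <- c) p.1 *: H p.2.
Proof.
move=> cT; rewrite /fvec mulmx_suml big_seq [RHS]big_seq.
by apply: eq_bigr => p pc; rewrite -scalemxAl tvec_tree_mx ?cT.
Qed.

Lemma treeAct_tree_mx m (H : tr -> 'rV[K]_m) (Q : 'M_m) (s : 'S_n) :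
  (forall t, t \in T -> H t *m Q = H (relabel (actn s) t)) ->
  treeAct K s *m tree_mx H = tree_mx H *m Q.
Proof.
move=> HQ; apply/row_matrixP => i; rewrite !row_mul rowK HQ ?mem_nth //.
have sT : relabel (actn s) (nth (Lf 0) T i) \in T by rewrite relabel_trees ?mem_nth.
rewrite -(tvec_tree_mx H sT); congr (_ *m _); apply/rowP => j.
by rewrite !mxE (set_nth_default (relabel (actn s) (nth (Lf 0) T i)) (Lf 0)).
Qed.

Lemma wordAct_row (F : seq nat -> K) (s : 'S_n) :
  (\row_j F (nth [::] W j)) *m wordAct K s = \row_j F (map (actn s^-1) (nth [::] W j)).
Proof.
have act_eq w w' : (w' == map (actn s) w) = (w == map (actn s^-1) w').
  apply/eqP/eqP => ->; rewrite -map_comp map_id_in // => x _ /=.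
    exact: actnK.
  exact: actnKV.
apply/rowP => k; rewrite !mxE; under eq_bigr do rewrite !mxE act_eq mulrC.
apply: (sum_indicator_nth _ _ F (words_uniq n)).
by rewrite mem_words perm_map_actn // -mem_words mem_nth.
Qed.

Lemma eval_row_act (s : 'S_n) t : eval_row t *m LieAssAct K s = eval_row (relabel (actn s) t).
Proof.
rewrite /eval_row /LieAssAct mul_row_block !mulmx0 addr0 add0r /lie_row /ass_row.
rewrite !wordAct_row; congr row_mx; apply/rowP => k; rewrite !mxE.
  by rewrite (lie_eval_relabel _ (actnK s) (actnKV s)).
by rewrite (ass_eval_relabel _ (actnK s) (actnKV s)).
Qed.

Lemma evalmx_equivariant (s : 'S_n) : treeAct K s *m evalmx = evalmx *m LieAssAct K s.
Proof. by apply: treeAct_tree_mx => t _; rewrite eval_row_act. Qed.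

Lemma sum_eval_row (c : seq (K * tr)) :
  \sum_(p <- c) p.1 *: eval_row p.2 =
  row_mx (\row_j comb_eval (lie_eval K) c (nth [::] W j))
         (\row_j comb_eval (ass_eval K) c (nth [::] W j)).
Proof.
elim: c => [|p c IH].
  by rewrite big_nil -row_mx0; congr row_mx; apply/rowP => j; rewrite !mxE /comb_eval big_nil.
rewrite big_cons IH /eval_row scale_row_mx add_row_mx.
by congr row_mx; apply/rowP => j; rewrite !mxE /comb_eval big_cons.
Qed.

Lemma ArbRel_evalmx : ArbRel K n *m evalmx = 0.
Proof.
apply/row_matrixP => i; rewrite row_mul rowK row0.
have cR : nth [::] (Rels K n) i \in Rels K n by rewrite mem_nth.
rewrite fvec_tree_mx => [|p]; last exact: Rels_trees cR.
have [t _ /all_rels_vanishes c0] := flatten_mapP cR.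
rewrite sum_eval_row -row_mx0; congr row_mx; apply/rowP => j; rewrite !mxE.
  by case: (c0 (nth [::] W j)).
by case: (c0 (nth [::] W j)).
Qed.

End EvalMatrix.

(** * Reduction to normal forms *)

Section Reduction.
Variables (K : fieldType) (n : nat).
Local Notation T := (trees n).
Local Notation R := (ArbRel K n).

Definition scalec (k : K) (c : seq (K * tr)) := [seq (k * p.1, p.2) | p <- c].

Lemma fvec_nil : fvec n ([::] : seq (K * tr)) = 0.
Proof. by rewrite /fvec big_nil. Qed.

Lemma fvec_cons (p : K * tr) c : fvec n (p :: c) = p.1 *: tvec K n p.2 + fvec n c.
Proof. by rewrite /fvec big_cons. Qed.

Lemma fvec_cat (c d : seq (K * tr)) : fvec n (c ++ d) = fvec n c + fvec n d.
Proof. by rewrite /fvec big_cat. Qed.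

Lemma fvec_scale k (c : seq (K * tr)) : fvec n (scalec k c) = k *: fvec n c.
Proof. by rewrite /fvec big_map scaler_sumr; apply: eq_bigr => p _; rewrite scalerA. Qed.

Lemma Rels_sub (c : seq (K * tr)) : c \in Rels K n -> (fvec n c <= R)%MS.
Proof.
move=> cR; have ci : (index c (Rels K n) < size (Rels K n))%N by rewrite index_mem.
by apply: submx_trans (row_sub (Ordinal ci) R) => /=; rewrite rowK nth_index.
Qed.

(* [s] is congruent to the combination [c] modulo the relations, in every context. *)
Definition reduces (s : tr) (c : seq (K * tr)) :=
  (forall p, p \in c -> perm_eq (leaves p.2) (leaves s)) /\
  (forall C, plug C s \in T -> (tvec K n (plug C s) - fvec n (mapc (plug C) c) <= R)%MS).

Definition reducible (Q : pred tr) (s : tr) :=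
  exists2 d, reduces s d & forall p, p \in d -> Q p.2.

Lemma reduces_refl s : reduces s [:: (1, s)].
Proof.
split=> [p|C _]; first by rewrite inE => /eqP ->.
by rewrite /mapc /= fvec_cons fvec_nil scale1r addr0 subrr sub0mx.
Qed.

Lemma reducible_self (Q : pred tr) s : Q s -> reducible Q s.
Proof. by exists [:: (1, s)]; [exact: reduces_refl | move=> p; rewrite inE => /eqP ->]. Qed.

Lemma reducible_mono (Q Q' : pred tr) s :
  (forall t, Q t -> Q' t) -> reducible Q s -> reducible Q' s.
Proof. by move=> QQ' [d sd dQ]; exists d => // p /dQ /QQ'. Qed.

Lemma reduces_root s d : (1, s) :: d \in rel_root K s -> reduces s [seq (- p.1, p.2) | p <- d].
Proof.
move=> sd; split=> [p /mapP [q qd ->]|C sC] /=.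
  by apply: (rel_root_leaves sd); rewrite inE qd orbT.
have : (fvec n (mapc (plug C) ((1, s) :: d)) <= R)%MS.
  apply: Rels_sub; apply/flatten_mapP; exists (plug C s) => //.
  by apply: all_rels_plug; case: s sd {sC} => [//|a b|a b] sd; rewrite ?all_rels_Br ?all_rels_Pr mem_cat sd.
suff -> : fvec n (mapc (plug C) [seq (- p.1, p.2) | p <- d]) = - fvec n (mapc (plug C) d).
  by rewrite opprK /mapc /= fvec_cons scale1r.
by rewrite /fvec !big_map -sumrN; apply: eq_bigr => p _; rewrite /= scaleNr.
Qed.

Lemma reduces_fr f s c : reduces s c -> reduces (fr f s) (mapc (fr f) c).
Proof.
move=> [cs sc]; split=> [p /mapP [q /cs qs ->]|C sC]; first exact: leaves_fr.
by have := sc (f :: C) sC; rewrite /mapc -map_comp.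
Qed.

Lemma reducible_comb (Q : pred tr) s c :
  (forall p, p \in c -> perm_eq (leaves p.2) (leaves s)) ->
  (forall p, p \in c -> reducible Q p.2) ->
  exists d, [/\ forall p, p \in d -> perm_eq (leaves p.2) (leaves s),
                forall p, p \in d -> Q p.2 &
                forall C, plug C s \in T ->
                  (fvec n (mapc (plug C) c) - fvec n (mapc (plug C) d) <= R)%MS].
Proof.
elim: c => [|p c IH] cs cQ.
  by exists [::]; split=> // C _; rewrite /mapc /= fvec_nil subrr sub0mx.
have [||d [ds dQ cd]] := IH.
- by move=> q qc; apply: cs; rewrite inE qc orbT.
- by move=> q qc; apply: cQ; rewrite inE qc orbT.
have [e [es ep] eQ] := cQ p (mem_head _ _); have ps := cs p (mem_head _ _).
exists (scalec p.1 e ++ d); split.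
- move=> q; rewrite mem_cat => /orP [/mapP [q' q'e ->]|/ds //].
  exact: perm_trans (es _ q'e) ps.
- by move=> q; rewrite mem_cat => /orP [/mapP [q' /eQ ? ->]|/dQ].
move=> C sC; have pC : plug C p.2 \in T by apply: plug_trees sC ps.
have -> : mapc (plug C) (scalec p.1 e ++ d) =
          scalec p.1 (mapc (plug C) e) ++ mapc (plug C) d.
  by rewrite /mapc /scalec map_cat -!map_comp.
rewrite fvec_cat fvec_scale /mapc /= fvec_cons -/(mapc _ _) opprD addrACA -scalerBr.
by rewrite addmx_sub ?scalemx_sub ?ep ?cd.
Qed.

Lemma reducible_trans (Q : pred tr) s c :
  reduces s c -> (forall p, p \in c -> reducible Q p.2) -> reducible Q s.
Proof.
move=> [cs sc] cQ; have [d [ds dQ cd]] := reducible_comb cs cQ.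
exists d => //; split=> // C sC.
by rewrite -(subrK (fvec n (mapc (plug C) c)) (tvec K n _)) -addrA addmx_sub ?sc ?cd.
Qed.

Lemma reducible_fr (Q Q' : pred tr) f s :
  reducible Q s -> (forall t, Q t -> reducible Q' (fr f t)) -> reducible Q' (fr f s).
Proof.
move=> [d sd dQ] QQ'; apply: (reducible_trans (reduces_fr f sd)).
by move=> p /mapP [q /dQ qQ ->]; apply: QQ'.
Qed.

Lemma reducible_root (Q : pred tr) s d :
  (1, s) :: d \in rel_root K s -> (forall q, q \in d -> reducible Q q.2) -> reducible Q s.
Proof.
move=> sd dQ; apply: reducible_trans (reduces_root sd) _.
by move=> p /mapP [q /dQ qQ ->].
Qed.

End Reduction.

Fixpoint left_br t := match t with
  | Lf _ => true | Br l r => left_br l && (if r is Lf _ then true else false) | Pr _ _ => false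
  end.

Fixpoint left_pr t := match t with
  | Lf _ => true | Pr l r => left_pr l && (if r is Lf _ then true else false) | Br _ _ => false
  end.

Definition is_leaf t := if t is Lf _ then true else false.

Definition lie_nf m t := left_br t && (head 0%N (leaves t) == m).

Definition ass_nf t := left_pr t && ~~ is_leaf t.

Definition arb_nf t := lie_nf 0 t || ass_nf t.

Fixpoint weight t := match t with
  | Lf _ => 1%N | Br l r => (weight l + weight r + 2)%N | Pr l r => (weight l + weight r).+1
  end.

Lemma head_leaves_cat t s : head 0%N (leaves t ++ s) = head 0%N (leaves t).
Proof. by case: (leaves t) (leaves_gt0 t). Qed.

Section NormalForms.
Variables (K : fieldType) (n : nat).
Local Notation reducible := (@reducible K n).

Ltac mem_rel_root := rewrite /rel_root /= ?mem_cat ?inE ?mem_cat ?inE ?eqxx ?orbT.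

Lemma reducible_anti Q a b : reducible Q (Br b a) -> reducible Q (Br a b).
Proof.
move=> ba; apply: (@reducible_root _ _ _ _ [:: (1, Br b a)]); first by mem_rel_root.
by move=> q; rewrite inE => /eqP ->.
Qed.

Lemma reducible_jacobi Q a b c : reducible Q (Br b (Br c a)) -> reducible Q (Br c (Br a b)) ->
  reducible Q (Br a (Br b c)).
Proof.
move=> bca cab; apply: (@reducible_root _ _ _ _ [:: (1, Br b (Br c a)); (1, Br c (Br a b))]).
  by mem_rel_root.
by move=> q; rewrite !inE => /orP [] /eqP ->.
Qed.

Lemma reducible_BrPr Q a b c : reducible Q (Pr (Br a b) c).
Proof. by apply: (@reducible_root _ _ _ _ [::]); mem_rel_root. Qed.

Lemma reducible_PrPr Q a b c : reducible Q (Pr a (Pr b c)).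
Proof. by apply: (@reducible_root _ _ _ _ [::]); mem_rel_root. Qed.

Lemma reducible_PrBr Q a b c : reducible Q (Br (Pr a b) c).
Proof. by apply: (@reducible_root _ _ _ _ [::]); mem_rel_root. Qed.

Lemma reducible_PrLie Q a b c : reducible Q (Pr (Pr a b) c) -> reducible Q (Pr (Pr a c) b) ->
  reducible Q (Pr a (Br b c)).
Proof.
move=> abc acb; apply: (@reducible_root _ _ _ _ [:: (-1, Pr (Pr a b) c); (1, Pr (Pr a c) b)]).
  by mem_rel_root.
by move=> q; rewrite !inE => /orP [] /eqP ->.
Qed.

Lemma reducible_Br_lie m q : brOnly q -> forall p, lie_nf m p -> reducible (lie_nf m) (Br p q).
Proof.
elim: q => [x|q1 IH1 q2 IH2|//] /=.
  by move=> _ p pm; apply: reducible_self; move: pm; rewrite /lie_nf /= andbT head_leaves_cat.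
case/andP => b1 b2 p pm; apply: reducible_jacobi; apply: reducible_anti.
  apply: (@reducible_fr _ _ (lie_nf m) _ (FBl q1) (Br q2 p)); last exact: IH1.
  by apply: reducible_anti; exact: IH2.
apply: (@reducible_fr _ _ (lie_nf m) _ (FBl q2) (Br p q1)); last exact: IH2.
exact: IH1.
Qed.

Lemma reducible_lie m t : brOnly t -> m \in leaves t -> reducible (lie_nf m) t.
Proof.
elim: t => [x|u IHu v IHv|//] /=.
  by move=> _; rewrite inE => /eqP ->; apply: reducible_self; rewrite /lie_nf /= eqxx.
case/andP => bu bv; rewrite mem_cat => /orP [mu|mv].
  apply: (@reducible_fr _ _ (lie_nf m) _ (FBl v) u); first exact: IHu.
  by move=> t; exact: reducible_Br_lie.
apply: reducible_anti; apply: (@reducible_fr _ _ (lie_nf m) _ (FBl u) v); first exact: IHv.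
by move=> t; exact: reducible_Br_lie.
Qed.

Lemma reducible_Br_ass Q u v : reducible ass_nf u -> reducible Q (Br u v).
Proof.
move=> uA; apply: (@reducible_fr _ _ ass_nf _ (FBl v) u uA).
by case=> // a b _; exact: reducible_PrBr.
Qed.

(* Induction on [weight], which decreases under [a*[b,c] -> (a*b)*c - (a*c)*b]. *)
Lemma reducible_ass t : ~~ brOnly t -> reducible ass_nf t.
Proof.
have [N] := ubnP (weight t); elim: N t => // N IH [//|u v|u v] /= tN tB.
- case uB: (brOnly u); last by apply/reducible_Br_ass/IH; rewrite ?uB //; lia.
  by apply/reducible_anti/reducible_Br_ass/IH; [lia | move: tB; rewrite uB].
- case: v tN {tB} => [y|b c|b c] tN; last exact: reducible_PrPr.
  + case: u tN => [x|a b|a b] tN; first exact: reducible_self.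
      exact: reducible_BrPr.
    apply: (@reducible_fr _ _ ass_nf _ (FPl (Lf y)) (Pr a b)); first by apply: IH => //; move: tN => /=; lia.
    by move=> t /andP [tP _]; apply: reducible_self; rewrite /ass_nf /= tP.
  + by apply: reducible_PrLie; apply: IH => //; move: tN => /=; lia.
Qed.

Lemma trees_reducible t : t \in trees n -> reducible arb_nf t.
Proof.
case tB: (brOnly t) => tT; last first.
  by apply: reducible_mono (reducible_ass (negbT tB)) => s sA; rewrite /arb_nf sA orbT.
apply: reducible_mono (reducible_lie tB _) => [s|]; first by rewrite /arb_nf => ->.
move: tT; rewrite mem_trees => /[dup] /perm_size; rewrite size_iota => <- /perm_mem ->.
by rewrite mem_iota add0n; apply: leaves_gt0.
Qed.

End NormalForms.

Lemma left_br_inj s s' : left_br s -> left_br s' -> leaves s = leaves s' -> s = s'.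
Proof.
elim: s s' => [x|l IH r _|//] [x'|l' r'|//] //=; first by move=> _ _ [->].
- move=> _ _ /(congr1 size); rewrite /= size_cat.
  by move: (leaves_gt0 l') (leaves_gt0 r'); lia.
- move=> _ _ /(congr1 size); rewrite /= size_cat.
  by move: (leaves_gt0 l) (leaves_gt0 r); lia.
case: r => [y|??|??]; rewrite ?andbF ?andbT // => bl.
case: r' => [y'|??|??]; rewrite ?andbF ?andbT // => bl'.
by rewrite /= !cats1 => /eqP; rewrite eqseq_rcons => /andP [/eqP /(IH _ bl bl') -> /eqP ->].
Qed.

Lemma left_pr_inj s s' : left_pr s -> left_pr s' -> leaves s = leaves s' -> s = s'.
Proof.
elim: s s' => [x|//|l IH r _] [x'|//|l' r'] //=; first by move=> _ _ [->].
- move=> _ _ /(congr1 size); rewrite /= size_cat.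
  by move: (leaves_gt0 l') (leaves_gt0 r'); lia.
- move=> _ _ /(congr1 size); rewrite /= size_cat.
  by move: (leaves_gt0 l) (leaves_gt0 r); lia.
case: r => [y|??|??]; rewrite ?andbF ?andbT // => pl.
case: r' => [y'|??|??]; rewrite ?andbF ?andbT // => pl'.
by rewrite /= !cats1 => /eqP; rewrite eqseq_rcons => /andP [/eqP /(IH _ pl pl') -> /eqP ->].
Qed.

Section NormalFormEval.
Variable R : comRingType.

Lemma lie_eval_nonbr t u : ~~ brOnly t -> lie_eval R t u = 0.
Proof.
elim: t u => [x|l IHl r IHr|l IHl r IHr] u //=; rewrite negb_and /wbr => /orP [lB|rB].
  by rewrite (wmul_eq0l _ _ (IHl^~ lB)) (wmul_eq0r _ _ (IHl^~ lB)) subrr.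
by rewrite (wmul_eq0r _ _ (IHr^~ rB)) (wmul_eq0l _ _ (IHr^~ rB)) subrr.
Qed.

Lemma ass_eval_left_pr t u : left_pr t -> ass_eval R t u = (u == leaves t)%:R.
Proof.
elim: t u => [x|//|l IHl r _] u //= /andP [pl]; case: r => // y _.
case/lastP: u => [|v z]; first by rewrite wmul_delta1r_nil; case: (leaves l) (leaves_gt0 l).
rewrite wmul_delta1r IHl // cats1 eqseq_rcons.
by case: (z == y); case: (v == leaves l); rewrite /= ?mulr1 ?mulr0 ?mul0r.
Qed.

Lemma lie_eval_left_br t u : left_br t -> uniq (leaves t) -> u != [::] ->
  head 0%N u = head 0%N (leaves t) -> lie_eval R t u = (u == leaves t)%:R.
Proof.
elim: t u => [x|l IHl r _|//] u //= /andP [bl]; case: r => // y _.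
rewrite cat_uniq /= orbF andbT head_leaves_cat => /andP [ul yl] un hu.
have hl : head 0%N (leaves l) \in leaves l.
  by case: (leaves l) (leaves_gt0 l) => //= a s _; rewrite inE eqxx.
have hy : head 0%N (leaves l) != y by apply: contraNneq yl => <-.
rewrite /wbr; have -> : wmul (wdelta R [:: y]) (lie_eval R l) u = 0.
  by case: u un hu => // x w _ xh; rewrite wmul_delta1l -[x]/(head 0%N (x :: w)) xh (negbTE hy) mul0r.
rewrite subr0; case/lastP: u un hu => [//|v z] _.
rewrite wmul_delta1r cats1 eqseq_rcons; case: v => [|a v] /=.
  move=> ->; rewrite (negbTE hy) mul0r.
  by case: (leaves l) (leaves_gt0 l) => // b [|c s].
move=> ha; rewrite IHl //.
by case: (z == y); case: (_ == leaves l); rewrite /= ?mulr1 ?mulr0 ?mul0r.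
Qed.

End NormalFormEval.

Lemma lie_eval_expand (K : fieldType) t u : brOnly t ->
  lie_eval K t u = \sum_(p <- expand K t) p.1 * (u == p.2)%:R.
Proof.
elim: t u => [x|l IHl r IHr|//] u /=; first by rewrite big_seq1 mul1r.
case/andP => bl br; rewrite /wbr (eq_wmul _ (IHl^~ bl) (IHr^~ br)).
rewrite (eq_wmul _ (IHr^~ br) (IHl^~ bl)) !wmul_sum_delta big_cat !big_allpairs_dep /=.
congr (_ + _); rewrite exchange_big /= -sumrN; apply: eq_bigr => a _.
by rewrite -sumrN; apply: eq_bigr => b _; rewrite mulNr [b.1 * _]mulrC.
Qed.

(** * The arity-n component *)

Lemma trees_uniq_leaves n t : t \in trees n -> uniq (leaves t).
Proof. by rewrite mem_trees => /perm_uniq ->; rewrite iota_uniq. Qed.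

Lemma trees_nonleaf n t : (2 <= n)%N -> t \in trees n -> ~~ is_leaf t.
Proof.
move=> n2; rewrite mem_trees => /perm_size; rewrite size_iota.
by case: t => //= x n1; move: n2; rewrite -n1.
Qed.

Lemma arb_nf_shape t : ~~ is_leaf t -> arb_nf t ->
  [/\ left_br t, head 0%N (leaves t) == 0%N & exists l r, t = Br l r] \/
  left_pr t /\ exists l r, t = Pr l r.
Proof.
rewrite /arb_nf /lie_nf /ass_nf; case: t => // l r _ /=.
  by rewrite orbF => /andP [lb h0]; left; split=> //; exists l, r.
by rewrite andbT => lp; right; split=> //; exists l, r.
Qed.

Section Arity.
Variables (K : fieldType) (n : nat).
Hypothesis n_ge2 : (2 <= n)%N.
Local Notation T := (trees n).
Local Notation W := (words n).
Local Notation R := (ArbRel K n).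
Local Notation E := (evalmx K n).

Definition nf_trees := [seq t <- T | arb_nf t].

Definition nfmx : 'M[K]_(size nf_trees, size T) :=
  \matrix_(i < size nf_trees) tvec K n (nth (Lf 0) nf_trees i).

Lemma nf_treesP s : s \in nf_trees -> s \in T /\ arb_nf s.
Proof. by rewrite mem_filter => /andP []. Qed.

Lemma nf_trees_shape s : s \in nf_trees ->
  [/\ left_br s, head 0%N (leaves s) == 0%N & exists l r, s = Br l r] \/
  left_pr s /\ exists l r, s = Pr l r.
Proof. by case/nf_treesP => sT; apply: arb_nf_shape (trees_nonleaf n_ge2 sT). Qed.

Lemma tvec_sub_nf t : t \in T -> (tvec K n t <= R + nfmx)%MS.
Proof.
move=> tT; have [d [ds sd] dnf] := trees_reducible K tT.
have := sd [::] tT; rewrite /mapc /= map_id_in => [td|[]//].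
rewrite -(subrK (fvec n d) (tvec K n t)) addmx_sub_adds // /fvec big_seq.
apply: summx_sub => p pd; apply: scalemx_sub.
have pN : p.2 \in nf_trees.
  by rewrite mem_filter dnf //= mem_trees (perm_trans (ds _ pd)) // -mem_trees.
have pi : (index p.2 nf_trees < size nf_trees)%N by rewrite index_mem.
by apply: submx_trans (row_sub (Ordinal pi) nfmx); rewrite rowK /= nth_index.
Qed.

Lemma ArbRel_nf_full : ((1%:M : 'M[K]_(size T)) <= R + nfmx)%MS.
Proof.
apply/row_subP => i; rewrite row1.
have -> : delta_mx 0 i = tvec K n (nth (Lf 0) T i).
  apply/rowP => j; rewrite !mxE (set_nth_default (Lf 0)) //.
  by rewrite nth_uniq ?trees_uniq // eq_sym andTb.
by apply: tvec_sub_nf; rewrite mem_nth.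
Qed.

(* The evaluations of normal forms are triangular: each one has a coordinate
   (its own leaf word, in the Lie or in the associative part) where all the
   other normal forms vanish. *)
Lemma nf_eval_delta s0 : s0 \in nf_trees -> exists J,
  forall s, s \in nf_trees -> eval_row K n s 0 J = (s == s0)%:R.
Proof.
move=> s0N; have [s0T _] := nf_treesP s0N.
have j0 : (index (leaves s0) W < size W)%N by rewrite index_mem mem_words -mem_trees.
have ej0 : nth [::] W (Ordinal j0) = leaves s0 by rewrite nth_index // mem_words -mem_trees.
have [[b0 h0 [l0 [r0 e0]]]|[p0 [l0 [r0 e0]]]] := nf_trees_shape s0N.
- exists (lshift _ (Ordinal j0)) => s sN; rewrite /eval_row row_mxEl mxE ej0.
  have [[b h _]|[_ [l [r ->]]]] := nf_trees_shape sN; last by rewrite e0.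
  have s0n : leaves s0 != [::] by case: (leaves s0) (leaves_gt0 s0).
  rewrite (lie_eval_left_br _ b (trees_uniq_leaves (nf_treesP sN).1) s0n).
    suff -> : (leaves s0 == leaves s) = (s == s0) by [].
    by apply/idP/idP => [/eqP/(left_br_inj b0 b) ->|/eqP ->].
  by rewrite (eqP h0) (eqP h).
- exists (rshift _ (Ordinal j0)) => s sN; rewrite /eval_row row_mxEr mxE ej0.
  have [[_ _ [l [r ->]]]|[p _]] := nf_trees_shape sN; first by rewrite e0.
  rewrite ass_eval_left_pr //; suff -> : (leaves s0 == leaves s) = (s == s0) by [].
  by apply/idP/idP => [/eqP/(left_pr_inj p0 p) ->|/eqP ->].
Qed.

Lemma nf_eval_free (b : 'rV[K]_(size nf_trees)) : b *m (nfmx *m E) = 0 -> b = 0.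
Proof.
have -> : nfmx *m E = \matrix_(i < size nf_trees) eval_row K n (nth (Lf 0) nf_trees i).
  apply/row_matrixP => i; rewrite row_mul !rowK tvec_tree_mx //.
  by apply: (nf_treesP (mem_nth _ _)).1.
move=> b0; apply/rowP => i0; rewrite mxE.
have [J J0] := nf_eval_delta (mem_nth (Lf 0) (ltn_ord i0)).
have := congr1 (fun M : 'rV_(size W + size W) => M 0 J) b0; rewrite !mxE.
rewrite (bigD1 i0) //= big1 => [|i ii0]; rewrite mxE J0 ?mem_nth //.
  by rewrite eqxx mulr1 addr0.
by rewrite nth_uniq ?filter_uniq ?trees_uniq // val_eqE (negbTE ii0) mulr0.
Qed.

Lemma kermx_evalmx : (kermx E == R)%MS.
Proof.
apply/andP; split; last by apply/sub_kermxP; exact: ArbRel_evalmx.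
apply/row_subP => i; set v := row i (kermx E).
have vE : v *m E = 0 by rewrite -row_mul mulmx_ker row0.
have /sub_addsmxP [[a b] /= va] : (v <= R + nfmx)%MS.
  exact: submx_trans (submx1 v) ArbRel_nf_full.
have b0 : b = 0.
  by apply: nf_eval_free; move: vE; rewrite va mulmxDl -!mulmxA ArbRel_evalmx mulmx0 add0r.
by rewrite va b0 mul0mx addr0 submxMl.
Qed.

Lemma lie_row_expand t : brOnly t -> lie_row K n t = wfvec n (expand K t).
Proof.
move=> tB; apply/rowP => j; rewrite /wfvec mxE summxE lie_eval_expand //.
by apply: eq_bigr => p _; rewrite !mxE (set_nth_default [::] p.2).
Qed.

Lemma eval_row_sub t : t \in T -> (eval_row K n t <= LieAssMx K n)%MS.
Proof.
move=> tT; have : (lie_row K n t <= LieMx K n)%MS.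
  case tB: (brOnly t); last first.
    suff -> : lie_row K n t = 0 by exact: sub0mx.
    by apply/rowP => j; rewrite !mxE lie_eval_nonbr ?tB.
  have tL : t \in LieGen n by rewrite mem_filter tB tT.
  have ti : (index t (LieGen n) < size (LieGen n))%N by rewrite index_mem.
  apply: submx_trans (row_sub (Ordinal ti) _).
  by rewrite rowK /= nth_index // lie_row_expand.
case/submxP => x ex; rewrite /eval_row ex /LieAssMx.
have -> : row_mx (x *m LieMx K n) (ass_row K n t) =
          row_mx x (ass_row K n t) *m block_mx (LieMx K n) 0 0 1%:M.
  by rewrite mul_row_block !mulmx0 addr0 add0r mulmx1.
exact: submxMl.
Qed.

Lemma eval_row_in t : t \in T -> (eval_row K n t <= E)%MS.
Proof.
move=> tT; have ti : (index t T < size T)%N by rewrite index_mem.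
by apply: submx_trans (row_sub (Ordinal ti) _); rewrite rowK /= nth_index.
Qed.

Definition pr_comb (w : seq nat) : tr := foldl (fun t y => Pr t (Lf y)) (Lf (head 0%N w)) (behead w).

Lemma pr_comb_spec w : (2 <= size w)%N ->
  [/\ leaves (pr_comb w) = w, left_pr (pr_comb w) & exists l r, pr_comb w = Pr l r].
Proof.
case: w => [|x [|y w]] // _; rewrite /pr_comb /=.
elim/last_ind: w => [|w z [IHl IHp _]] /=; first by split=> //; exists (Lf x), (Lf y).
rewrite foldl_rcons /= IHl IHp -cats1 /=; split=> //.
by exists (foldl (fun t y => Pr t (Lf y)) (Pr (Lf x) (Lf y)) w), (Lf z).
Qed.

Lemma evalmx_LieAss : (E == LieAssMx K n)%MS.
Proof.
apply/andP; split.
  by apply/row_subP => i; rewrite rowK; apply/eval_row_sub/mem_nth.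
rewrite /LieAssMx block_mxEv col_mx_sub; apply/andP; split; apply/row_subP => i;
  rewrite row_row_mx row0.
- have /[dup] sL : nth (Lf 0) (LieGen n) i \in LieGen n by rewrite mem_nth.
  rewrite mem_filter => /andP [sB sT].
  have -> : row i (LieMx K n) = lie_row K n (nth (Lf 0) (LieGen n) i).
    by rewrite rowK lie_row_expand.
  have -> : 0 = ass_row K n (nth (Lf 0) (LieGen n) i).
    move: sB (trees_nonleaf n_ge2 sT); case: (nth _ _ i) => // l r _ _.
    by apply/rowP => j; rewrite !mxE.
  exact: eval_row_in.
- have wW : nth [::] W i \in W by rewrite mem_nth.
  have sw : (2 <= size (nth [::] W i))%N.
    by move: wW; rewrite mem_words => /perm_size ->; rewrite size_iota.
  have [lw pw [l [r e]]] := pr_comb_spec sw.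
  have -> : 0 = lie_row K n (pr_comb (nth [::] W i)) by apply/rowP => j; rewrite !mxE e.
  have -> : row i 1%:M = ass_row K n (pr_comb (nth [::] W i)).
    apply/rowP => j; rewrite !mxE ass_eval_left_pr // lw.
    by rewrite nth_uniq ?words_uniq // eq_sym.
  by apply: eval_row_in; rewrite mem_trees lw -mem_words.
Qed.

End Arity.

Theorem Arb_quot_iso K n : (2 <= n)%N ->
  quot_iso (ArbRel K n) (@treeAct K n) (LieAssMx K n) (@LieAssAct K n).
Proof.
move=> n_ge2; exists (evalmx K n); split.
- exact: kermx_evalmx.
- exact: evalmx_LieAss.
- exact: evalmx_equivariant.
Qed.

Lemma trees1 : trees 1 = [:: Lf 0]. Proof. by vm_compute. Qed.

Lemma words1 : words 1 = [:: [:: 0%N]]. Proof. by vm_compute. Qed.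

Theorem Arb1_quot_iso (K : fieldType) :
  quot_iso (ArbRel K 1) (@treeAct K 1) (1%:M : 'M[K]_(size (words 1))) (@wordAct K 1).
Proof.
pose F := @tree_mx K 1 _ (ass_row K 1).
have rkF : \rank F = 1%N.
  have [t0 w0] : (0 < size (trees 1))%N /\ (0 < size (words 1))%N by rewrite trees1 words1.
  have F00 : F (Ordinal t0) (Ordinal w0) = 1 by rewrite !mxE /= /wdelta eqxx.
  apply/eqP; rewrite eqn_leq (leq_trans (rank_leq_row F)) ?trees1 //.
  by rewrite lt0n mxrank_eq0; apply: contra_neq (oner_neq0 K) => F0; rewrite -F00 F0 mxE.
exists F; split.
- have R0 : size (Rels K 1) = 0%N by rewrite /Rels trees1.
  apply/andP; split; last by apply/sub_kermxP/row_matrixP => -[i iR]; exfalso; by rewrite R0 in iR.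
  have /eqP-> : kermx F == 0 by rewrite kermx_eq0 /row_free rkF trees1.
  exact: sub0mx.
- by rewrite submx1 sub1mx /row_full rkF words1.
- by move=> s; apply: treeAct_tree_mx => t _; rewrite /ass_row wordAct_row; apply/rowP => j;
    rewrite !mxE (ass_eval_relabel _ (actnK s) (actnKV s)).
Qed.

Theorem mainTheorem20 (K : fieldType) (charK0 : [pchar K] =i pred0) :
  quot_iso (ArbRel K 1) (@treeAct K 1)
           (1%:M : 'M[K]_(size (words 1))) (@wordAct K 1)
  /\ forall n : nat, (2 <= n)%N ->
     quot_iso (ArbRel K n) (@treeAct K n) (LieAssMx K n) (@LieAssAct K n).
Proof. by split; [exact: Arb1_quot_iso | exact: Arb_quot_iso]. Qed.
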